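(* (1) Let $n,m\ge1$, let $A_1,\dots,A_m$ be invertible real $n\times n$ matrices and $B_1,\dots,B_m$ real matrices with $n$ rows, and consider the switched linear control system $x_k=A_{i_k}x_{k-1}+B_{i_k}u_k$, $k\ge1$. If this system is controllable, then there exists a controllable sequence of length $k\le \frac{n(n+1)}{2}$. (2) For all integers $n\ge1$ and $m\ge1$ there exist invertible real $n\times n$ matrices $A_1,\dots,A_m$ and real matrices $B_1,\dots,B_m$ with $n$ rows such that the corresponding switched linear control system is controllable and its shortest controllable sequences have length (a) $n+\frac{m(m-1)}{2}$ if $m\le n$; (b) $\frac{n(n+1)}{2}$ if $m>n$.
   Context: $\Sigma=\{1,\dots,m\}$, $\Sigma^*$ is the set of finite words over $\Sigma$. For $\pi=i_1\cdots i_k\in\Sigma^*$, $\mathcal{R}(\pi)=\mathrm{Im}(A_{i_k}\cdots A_{i_2}B_{i_1},\dots,A_{i_k}B_{i_{k-1}},B_{i_k})$ is the set of states reachable at time $k$ from $x_0=0$ with switching sequence $i_1,\dots,i_k$ and arbitrary inputs. A sequence $\pi$ is controllable if $\mathcal{R}(\pi)=\mathbb{R}^n$; its length is the number of symbols. The system is controllable if $\bigcup_{\pi\in\Sigma^*}\mathcal{R}(\pi)=\mathbb{R}^n$. *)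

From HB Require Import structures.
From mathcomp Require Import all_boot all_order all_algebra.
From mathcomp Require Export reals.
Set Implicit Arguments. Unset Strict Implicit. Unset Printing Implicit Defensive.
Import Order.TTheory GRing.Theory Num.Theory.
Local Open Scope ring_scope.

(* Inputs: u k i is the input applied at time k (k >= 1) if the mode is i. *)
Section Switched.
Variables (R : realType) (n m : nat) (p : 'I_m -> nat).
Variables (A : 'I_m -> 'M[R]_n) (B : forall i : 'I_m, 'M[R]_(n, p i)).

(* state reached from x at time k-1, applying the sequence pi at times k, k+1, ... *)
Fixpoint run (u : nat -> forall i : 'I_m, 'cV[R]_(p i))
    (x : 'cV[R]_n) (k : nat) (pi : seq 'I_m) : 'cV[R]_n :=
  match pi with
  | [::] => x
  | i :: pi' => run u (A i *m x + B i *m u k i) k.+1 pi'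
  end.

Definition reachable (pi : seq 'I_m) (x : 'cV[R]_n) : Prop :=
  exists u : nat -> forall i : 'I_m, 'cV[R]_(p i), run u 0 1 pi = x.

Definition controllable_seq (pi : seq 'I_m) : Prop :=
  forall x : 'cV[R]_n, reachable pi x.

Definition controllable_system : Prop :=
  forall x : 'cV[R]_n, exists pi : seq 'I_m, reachable pi x.

End Switched.

From HB Require Import structures.
From mathcomp Require Import all_boot all_order all_algebra.
From mathcomp Require Import reals.
From mathcomp Require Import perm zify.
From Stdlib Require Import Classical.
Set Implicit Arguments. Unset Strict Implicit. Unset Printing Implicit Defensive.
Import Order.TTheory GRing.Theory Num.Theory.

(* (1) Reachable spaces evolve by R(pi i) = A_i R(pi) + Im B_i.  If no word of
   length at most d + 1 enlarges a d-dimensional space V, then V contains the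
   spaces of states that can be steered to the origin in k steps for k <= d + 1;
   these form an increasing chain, which must stabilise within d + 1 steps, so V
   contains all of them and no word at all enlarges V.  Controllability with
   invertible A_i yields some pi0 with R(pi0) = R^n, and R(pi pi0) contains
   R(pi0), so as long as dim R(pi) = d < n a word of length at most d + 1 raises
   the dimension: n(n+1)/2 = 1 + 2 + ... + n steps suffice.
   (2) Let c = min(m, n) and e = n - c.  Mode i gets the label l = min(i, c - 1)
   and acts by a permutation of coordinates: for l = 0 the cyclic shift of
   0, ..., e, with a single input entering at e; for l > 0 the transposition of
   e + l - 1 and e + l.  Reachable spaces are then coordinate subspaces.  An input
   needs l + 1 steps to reach coordinate e + l, and with weight 1 on 0, ..., e and
   l + 1 on e + l, every step raises the total weight of the support by at most
   one; the full support weighs n + c(c-1)/2, which a staircase of labels attains. *)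

Lemma exists_max_bounded (T : Type) (t0 : T) (f : T -> nat) b :
  (forall t, f t <= b) -> exists t, forall t', f t' <= f t.
Proof.
move=> fb; apply: NNPP => nomax.
have unbounded k : exists t, k <= f t.
  elim: k => [|k [t kft]]; first by exists t0.
  apply: NNPP => nobig; apply: nomax; exists t => t'.
  by rewrite leqNgt; apply/negP => ftt'; apply: nobig; exists t'; lia.
by have [t] := unbounded b.+1; have := fb t; lia.
Qed.

Section ReachableSpace.
Variables (R : realType) (n m : nat) (p : 'I_m -> nat).
Variables (A : 'I_m -> 'M[R]_n) (B : forall i : 'I_m, 'M[R]_(n, p i)).
Local Open Scope ring_scope.

Lemma run_rcons u x k pi i :
  run A B u x k (rcons pi i) = A i *m run A B u x k pi + B i *m u (k + size pi)%N i.
Proof.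
elim: pi x k => [|j pi IH] x k /=; first by rewrite addn0.
by rewrite IH addSnnS.
Qed.

Lemma eq_run_in u u' x k pi : (forall t, (t < k + size pi)%N -> u t = u' t) ->
  run A B u x k pi = run A B u' x k pi.
Proof.
elim: pi x k => [|j pi IH] x k //= eq_u.
rewrite eq_u /= -?addSnnS ?leq_addr //.
by apply: IH => t lt_t; apply: eq_u; rewrite /= -addSnnS.
Qed.

(* Reachable sets are handled through their transposes: [reach_space pi] is a
   square matrix whose row space is [R(pi)^T]. *)
Definition reach_step (M : 'M[R]_n) (i : 'I_m) : 'M[R]_n :=
  (M *m (A i)^T + (B i)^T)%MS.
Definition reach_from M (w : seq 'I_m) := foldl reach_step M w.
Definition reach_space pi := reach_from 0 pi.

Lemma reach_space_rcons pi i :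
  reach_space (rcons pi i) = reach_step (reach_space pi) i.
Proof. by rewrite /reach_space /reach_from foldl_rcons. Qed.

Lemma reachableP pi x : reachable A B pi x <-> (x^T <= reach_space pi)%MS.
Proof.
elim/last_ind: pi x => [|pi i IH] x.
  rewrite /reach_space /= submx0; split; first by move=> [u <-]; rewrite trmx0.
  by move=> /eqP x0; exists (fun _ _ => 0); rewrite -[x]trmxK x0 trmx0.
rewrite reach_space_rcons /reach_step; split.
  move=> [u <-]; rewrite run_rcons raddfD /= !trmx_mul.
  apply: addmx_sub_adds; last exact: submxMl.
  by apply: submxMr; apply/IH; exists u.
move=> /sub_addsmxP [[a b] /= def_x].
have [u reach_u] : reachable A B pi (a *m reach_space pi)^T.
  by apply/IH; rewrite trmxK submxMl.
pose u' t := if t == (1 + size pi)%N then dfwith (u t) b^T else u t.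
exists u'; rewrite run_rcons.
rewrite -(@eq_run_in u) => [|t lt_t]; last by rewrite /u' (ltn_eqF lt_t).
rewrite reach_u /u' eqxx dfwith_in -[x]trmxK def_x raddfD /= !trmx_mul !trmxK.
by rewrite mulmxA.
Qed.

Lemma reach_from_mono M N w : (M <= N)%MS -> (reach_from M w <= reach_from N w)%MS.
Proof.
elim: w M N => [|i w IH] M N //= sMN.
by apply: IH; apply: addsmxS => //; apply: submxMr.
Qed.

Lemma reach_space_cat pi w : reach_space (pi ++ w) = reach_from (reach_space pi) w.
Proof. by rewrite /reach_space /reach_from foldl_cat. Qed.

Lemma reach_space_sub_cat pi w : (reach_space w <= reach_space (pi ++ w))%MS.
Proof. by rewrite reach_space_cat; apply: reach_from_mono; apply: sub0mx. Qed.

Hypothesis A_unit : forall i, A i \in unitmx.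

Lemma unitmx_trA i : (A i)^T \in unitmx.
Proof. by rewrite unitmx_tr A_unit. Qed.

Lemma mxrank_mulAT (M : 'M[R]_n) i : \rank (M *m (A i)^T) = \rank M.
Proof. by rewrite mxrankMfree // row_free_unit unitmx_trA. Qed.

Lemma reach_step_rank_le M i :
  (\rank (reach_step M i) <= \rank M)%N = ((B i)^T <= M *m (A i)^T)%MS.
Proof.
have sub_step := addsmxSl (M *m (A i)^T) (B i)^T.
rewrite -(mxrank_mulAT M i) -[RHS]andTb -(submx_refl (M *m (A i)^T)) -addsmx_sub.
by rewrite -(mxrank_leqif_sup sub_step).2 eqn_leq (mxrankS sub_step).
Qed.

Definition flow_mx (w : seq 'I_m) : 'M[R]_n :=
  foldl (fun P i => P *m (A i)^T) 1%:M w.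

Lemma flow_mx_unit w : flow_mx w \in unitmx.
Proof.
elim/last_ind: w => [|w i IH]; first by rewrite unitmx1.
by rewrite /flow_mx foldl_rcons unitmx_mul IH unitmx_trA.
Qed.

Lemma reach_from_flow M w : (M *m flow_mx w <= reach_from M w)%MS.
Proof.
elim/last_ind: w => [|w i IH]; first by rewrite mulmx1.
rewrite /flow_mx /reach_from !foldl_rcons -/(flow_mx w) -/(reach_from M w).
by rewrite mulmxA; apply: submx_trans (addsmxSl _ _); apply: submxMr.
Qed.

(* A sequence of maximal rank absorbs every prefix [w], up to the invertible
   flow of [pi]; controllability then forces full rank. *)
Lemma controllable_full_reach_space :
  controllable_system A B -> exists pi, \rank (reach_space pi) = n.
Proof.
move=> ctrl.
have [pi max_pi] := exists_max_bounded [::] (fun pi => rank_leq_col (reach_space pi)).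
exists pi; apply/eqP; rewrite -[_ == _]sub1mx; apply/rV_subP => y _.
have [w /reachableP reach_w] := ctrl (y *m invmx (flow_mx pi))^T.
have absorb : (reach_space (w ++ pi) <= reach_space pi)%MS.
  have sub_cat := reach_space_sub_cat w pi.
  by rewrite -(mxrank_leqif_sup sub_cat).2 eqn_leq mxrankS //= max_pi.
apply: submx_trans absorb; rewrite reach_space_cat.
rewrite -[y](mulmxKV (flow_mx_unit pi)); apply: submx_trans (reach_from_flow _ _).
by apply: submxMr; rewrite trmxK in reach_w.
Qed.

(* [back k] spans the (transposed) states that can be steered to the origin in
   [k] steps. *)
Definition back_step (X : 'M[R]_n) : 'M[R]_n :=
  (\sum_(i < m) ((B i)^T + X)%MS *m invmx (A i)^T)%MS.
Definition back k := iter k back_step 0.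

Lemma back_step_subP X (M : 'M[R]_n) :
  reflect (forall i, ((B i)^T + X <= M *m (A i)^T)%MS) (back_step X <= M)%MS.
Proof.
have sub_inv i (Y : 'M_n) : (Y *m invmx (A i)^T <= M)%MS = (Y <= M *m (A i)^T)%MS.
  have free_A : row_free (A i)^T by rewrite row_free_unit unitmx_trA.
  by rewrite -(submxMfree _ _ free_A) mulmxKV ?unitmx_trA.
apply: (iffP sumsmx_subP) => [sub_i i|sub_i i _]; last by rewrite sub_inv.
by rewrite -sub_inv sub_i.
Qed.

Lemma back_step_mono X Y : (X <= Y)%MS -> (back_step X <= back_step Y)%MS.
Proof.
move=> sXY; apply/sumsmx_subP => i _; apply: (sumsmx_sup i) => //.
by apply: submxMr; apply: addsmxS.
Qed.

Lemma back_le j k : (j <= k)%N -> (back j <= back k)%MS.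
Proof.
move=> /subnKC <-; move: (k - j)%N => d; rewrite /back iterD.
elim: j => [|j IH]; first exact: sub0mx.
by rewrite !iterS; apply: back_step_mono.
Qed.

Lemma back_stable j : (back j.+1 <= back j)%MS -> forall k, (back k <= back j)%MS.
Proof.
move=> stab k; case: (leqP k j) => [|lt_jk]; first exact: back_le.
elim: k lt_jk => // k IH; rewrite ltnS leq_eqVlt => /orP [/eqP <- //|/IH sub_k].
exact: submx_trans (back_step_mono sub_k) stab.
Qed.

Lemma mxrank_back k :
  (forall j, (j < k)%N -> ~~ (back j.+1 <= back j)%MS) -> (k <= \rank (back k))%N.
Proof.
elim: k => // k IH grow; apply: leq_ltn_trans (IH _) (rank_ltmx _) => [j lt_jk|].
  by apply: grow; apply: ltnW.
by rewrite ltmxE back_le //= grow.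
Qed.

Lemma back_sub_of_rank_stable k M :
  (forall w, (size w <= k)%N -> (\rank (reach_from M w) <= \rank M)%N) ->
  (back k <= M)%MS.
Proof.
elim: k M => [|k IH] M stable; first exact: sub0mx.
apply/back_step_subP => i; rewrite addsmx_sub.
have le_step : (\rank (reach_step M i) <= \rank M)%N by apply: (stable [:: i]).
have sub_step : (reach_step M i <= M *m (A i)^T)%MS.
  by rewrite addsmx_sub submx_refl -reach_step_rank_le.
rewrite -reach_step_rank_le le_step /=; apply: submx_trans sub_step.
apply: IH => w size_w; apply: leq_trans (stable (i :: w) size_w) _.
by rewrite -(mxrank_mulAT M i) mxrankS // addsmxSl.
Qed.

Lemma rank_reach_from_le M w :
  (forall k, (back k <= M)%MS) -> (\rank (reach_from M w) <= \rank M)%N.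
Proof.
elim: w M => [|i w IH] M back_sub //=.
have /back_step_subP/(_ i) := back_sub 1%N; rewrite addsmx_sub => /andP [sBMA _].
apply: leq_trans (IH _ _) _ => [k|]; last by rewrite reach_step_rank_le.
have /back_step_subP/(_ i) := back_sub k.+1; rewrite addsmx_sub => /andP [_ sXMA].
exact: submx_trans sXMA (addsmxSl _ _).
Qed.

Lemma rank_reach_from_stable M :
  (forall w, (size w <= (\rank M).+1)%N -> (\rank (reach_from M w) <= \rank M)%N) ->
  forall w, (\rank (reach_from M w) <= \rank M)%N.
Proof.
move=> stable w; apply: rank_reach_from_le.
have back_sub := back_sub_of_rank_stable stable.
have [/existsP [j stab_j] k|] :=
  boolP [exists j : 'I_(\rank M).+1, back j.+1 <= back j]%MS.
  apply: submx_trans (back_stable stab_j k) (submx_trans (back_le _) back_sub).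
  exact: ltnW (ltn_ord j).
rewrite negb_exists => /forallP grow.
have := mxrank_back (fun j lt_j => grow (Ordinal lt_j)).
by have := mxrankS back_sub; lia.
Qed.

Lemma reach_space_rank_grows pi0 pi :
  \rank (reach_space pi0) = n -> (\rank (reach_space pi) < n)%N ->
  exists w, (size w <= (\rank (reach_space pi)).+1)%N /\
            (\rank (reach_space pi) < \rank (reach_space (pi ++ w)))%N.
Proof.
move=> full_pi0 lt_n; apply: NNPP => no_grow.
have stable w : (size w <= (\rank (reach_space pi)).+1)%N ->
    (\rank (reach_from (reach_space pi) w) <= \rank (reach_space pi))%N.
  move=> size_w; rewrite leqNgt; apply/negP => grows; apply: no_grow.
  by exists w; rewrite reach_space_cat.
have := rank_reach_from_stable stable pi0.
have := mxrankS (reach_from_mono pi0 (sub0mx n (reach_space pi))).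
by rewrite -/(reach_space pi0) full_pi0; lia.
Qed.

Lemma exists_reach_space_rank_ge d : controllable_system A B -> (d <= n)%N ->
  exists pi, (size pi <= 'C(d.+1, 2))%N /\ (d <= \rank (reach_space pi))%N.
Proof.
move=> /controllable_full_reach_space [pi0 full_pi0].
elim: d => [|d IH] lt_dn; first by exists [::].
have [pi [size_pi le_d]] := IH (ltnW lt_dn).
have [le_d1|lt_d1] := leqP d.+1 (\rank (reach_space pi)).
  by exists pi; rewrite binS bin1; split=> //; lia.
have rank_pi : \rank (reach_space pi) = d by lia.
have [|w [size_w grows]] := reach_space_rank_grows full_pi0 (pi := pi); first lia.
by exists (pi ++ w); rewrite size_cat binS bin1; rewrite rank_pi in size_w grows; lia.
Qed.

Lemma short_controllable_seq : controllable_system A B ->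
  exists pi, (size pi <= (n * n.+1) %/ 2)%N /\ controllable_seq A B pi.
Proof.
move=> ctrl; have [pi [size_pi full_pi]] := exists_reach_space_rank_ge ctrl (leqnn n).
exists pi; split; first by move: size_pi; rewrite bin2 divn2 mulnC.
move=> x; apply/reachableP; apply: submx_full.
by rewrite /row_full eqn_leq rank_leq_col.
Qed.

End ReachableSpace.

Definition relabel (e l j : nat) : nat :=
  if l == 0 then (if j < e then j.+1 else if j == e then 0 else j)
  else if j == (e + l).-1 then e + l else if j == e + l then (e + l).-1 else j.

Ltac case_relabel := rewrite /relabel; repeat case: ifP => /=; try lia.

Lemma relabel_lt e l j N : e + l < N -> j < N -> relabel e l j < N.
Proof. by case_relabel. Qed.

Lemma relabel_inj e l : injective (relabel e l).
Proof. by move=> j k; case_relabel. Qed.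

(* The coordinates that may be nonzero after the labels [ls], from states
   supported in [S]. *)
Definition supp_step e (S : nat -> bool) l : nat -> bool :=
  fun j => S (relabel e l j) || (l == 0) && (j == e).
Definition supp_from e S (ls : seq nat) := foldl (supp_step e) S ls.

Lemma eq_supp_from e S S' ls : S =1 S' -> supp_from e S ls =1 supp_from e S' ls.
Proof.
elim: ls S S' => [|l ls IH] S S' eqS //=.
by apply: IH => j; rewrite /supp_step eqS.
Qed.

Lemma supp_from_rcons e S ls l j :
  supp_from e S (rcons ls l) j = supp_from e S ls (relabel e l j) || (l == 0) && (j == e).
Proof. by rewrite /supp_from foldl_rcons. Qed.

Lemma supp_from_cat e S ls1 ls2 :
  supp_from e S (ls1 ++ ls2) = supp_from e (supp_from e S ls1) ls2.
Proof. by rewrite /supp_from foldl_cat. Qed.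

Lemma supp_from_shift e S q : (forall j, j <= e + q -> S j = false) ->
  supp_from e (fun j => S j || (j == e)) (iota 1 q) =1 (fun j => S j || (j == e + q)).
Proof.
elim: q => [|q IH] S0 j; first by rewrite addn0.
have -> : iota 1 q.+1 = rcons (iota 1 q) q.+1.
  by rewrite -cats1 -(addn1 q) iotaD add1n addn1.
rewrite supp_from_rcons IH => [|i le_i]; last first.
  by apply: S0; lia.
rewrite /relabel /= addnS /=.
case: (eqVneq j (e + q)) => [->|ne_j]; first by rewrite !S0 ?eqxx //=; lia.
case: (eqVneq j (e + q).+1) => [->|ne_j']; first by rewrite eqxx !orbT.
by rewrite (negbTE ne_j) !orbF.
Qed.

Lemma supp_from_inject e S k : (forall j, j <= e + k -> S j = false) ->
  supp_from e S (iota 0 k.+1) =1 (fun j => S j || (j == e + k)).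
Proof.
move=> S0 j; rewrite /= -/(supp_from _ _ _).
rewrite (@eq_supp_from e _ (fun j => S j || (j == e))) ?supp_from_shift // => i.
rewrite /supp_step /relabel /=.
case: ltnP => [lt_ie|le_ei]; first by rewrite !S0 ?(gtn_eqF lt_ie) //; lia.
by case: (eqVneq i e) => [->|]; rewrite ?orbT.
Qed.

(* The labels [0..k], [0..k-1], ..., [0..1]: each run pushes one input from
   [e] up to [e + k], [e + k - 1], ..., [e + 1]. *)
Fixpoint staircase (k : nat) : seq nat :=
  if k is k'.+1 then iota 0 k.+1 ++ staircase k' else [::].

Lemma size_staircase k : size (staircase k) = k + 'C(k.+1, 2).
Proof.
by elim: k => //= k IH; rewrite size_cat size_iota IH (binS k.+1 1) bin1; lia.
Qed.

Lemma staircase_le k : all (leq^~ k) (staircase k).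
Proof.
elim: k => //= k IH; rewrite all_cat; apply/andP; split.
  by apply/allP => l; rewrite mem_iota; lia.
by apply: sub_all IH => l /=; lia.
Qed.

Lemma supp_from_staircase e S k : (forall j, j <= e + k -> S j = false) ->
  supp_from e S (staircase k) =1 (fun j => S j || (e < j <= e + k)).
Proof.
elim: k S => [|k IH] S S0 j /=; first by rewrite orbC; case: ltnP => //=; lia.
rewrite supp_from_cat (eq_supp_from _ _ (supp_from_inject S0)) IH => [|i le_i]; last first.
  by rewrite S0 /=; lia.
by case: (S j) => //=; apply/idP/idP; lia.
Qed.

Lemma supp_from_rotate e S q : q <= e.+1 -> (forall j, j <= e -> S j = false) ->
  supp_from e S (nseq q 0) =1 (fun j => S j || (e.+1 - q <= j <= e)).
Proof.
move=> le_q S0; elim: q le_q => [|q IH] le_q j.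
  by rewrite /= orbC; case: leqP => //=; lia.
rewrite -{1}addn1 nseqD cats1 supp_from_rcons IH; last lia.
rewrite /relabel /=; case: ltnP => [lt_je|le_ej].
  by rewrite !S0 //=; lia.
case: (eqVneq j e) => [->|ne_je]; first by rewrite orbT; apply/esym/orP; right; lia.
by rewrite orbF; case: (S j) => //=; lia.
Qed.

Definition weight e j := if j <= e then 1 else j - e + 1.

Lemma weight_relabel e l j :
  weight e j <= weight e (relabel e l j) + ((l != 0) && (relabel e l j == (e + l).-1)).
Proof. by rewrite /weight; case_relabel. Qed.

Lemma sum_weight e k : \sum_(0 <= j < e.+1 + k) weight e j = e.+1 + k + 'C(k.+1, 2).
Proof.
elim: k => [|k IH].
  rewrite addn0 bin_small // addn0 (@eq_big_nat _ _ _ 0 e.+1 _ (fun=> 1)).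
    by rewrite sum_nat_const_nat subn0 muln1.
  by move=> j /andP [_ lt_j]; rewrite /weight -ltnS lt_j.
by rewrite addnS big_nat_recr //= IH (binS k.+1 1) bin1 /weight; case: ifP; lia.
Qed.

Lemma sum_ord_eq_le1 n c : \sum_(k < n) (k == c :> nat) <= 1.
Proof.
case: (ltnP c n) => [lt_cn|le_nc]; last first.
  by rewrite big1 // => k _; rewrite ltn_eqF // (leq_trans (ltn_ord k)).
rewrite (bigD1 (Ordinal lt_cn)) //= eqxx big1 // => k.
by rewrite -val_eqE /= => /negbTE ->.
Qed.

Section Construction.
Variables (R : realType) (n' m' : nat).
Local Open Scope ring_scope.
Local Notation n := n'.+1.
Local Notation m := m'.+1.

Definition nlab := minn m n.
Definition entry := (n - nlab)%N.
Definition lab (i : 'I_m) : nat := minn i nlab.-1.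

Lemma nlab_gt0 : (0 < nlab)%N. Proof. by rewrite /nlab; lia. Qed.
Lemma entry_add_nlab : (entry + nlab)%N = n. Proof. by rewrite /entry /nlab; lia. Qed.
Lemma entry_lab_lt i : (entry + lab i < n)%N.
Proof. by have := nlab_gt0; have := entry_add_nlab; rewrite /lab; lia. Qed.
Lemma entry_lt : (entry < n)%N. Proof. by have := entry_lab_lt ord0; lia. Qed.

Definition relabel_ord i (j : 'I_n) : 'I_n :=
  Ordinal (relabel_lt (entry_lab_lt i) (ltn_ord j)).

Lemma relabel_ord_inj i : injective (relabel_ord i).
Proof. by move=> j k /(congr1 val) /relabel_inj /val_inj. Qed.

Definition mode_perm i : 'S_n := perm (@relabel_ord_inj i).

Lemma mode_permE i j : mode_perm i j = relabel entry (lab i) j :> nat.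
Proof. by rewrite permE. Qed.

Definition entry_ord : 'I_n := Ordinal entry_lt.

Definition A_ex i : 'M[R]_n := perm_mx (mode_perm i).
Definition B_ex i : 'cV[R]_n := (lab i == 0%N)%:R *: delta_mx entry_ord 0.

Lemma A_ex_unit i : A_ex i \in unitmx. Proof. exact: unitmx_perm. Qed.

Lemma A_ex_mul i (x : 'cV[R]_n) j : (A_ex i *m x) j 0 = x (mode_perm i j) 0.
Proof. by rewrite -row_permE mxE. Qed.

Lemma B_ex_mul i (v : 'cV[R]_1) j :
  (B_ex i *m v) j 0 = ((lab i == 0%N) && (j == entry_ord))%:R * v 0 0.
Proof. by rewrite -scalemxAl !mxE big_ord1 !mxE eqxx andbT mulrA -natrM mulnb. Qed.

Lemma delta_mul_trA_ex i j :
  delta_mx 0 (mode_perm i j) *m (A_ex i)^T = delta_mx 0 j :> 'rV[R]_n.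
Proof.
by rewrite /A_ex tr_perm_mx -rowE; apply/rowP => k; rewrite !mxE permK eqxx eq_sym.
Qed.

Definition supp (pi : seq 'I_m) := supp_from entry (fun=> false) (map lab pi).

Lemma run_supp u (x : 'cV[R]_n) k pi (S : nat -> bool) :
  (forall j : 'I_n, ~~ S j -> x j 0 = 0) ->
  forall j : 'I_n, ~~ supp_from entry S (map lab pi) j -> run A_ex B_ex u x k pi j 0 = 0.
Proof.
elim: pi S x k => [|i pi IH] S x k x_supp //= j.
apply: IH => {}j; rewrite /supp_step negb_or => /andP [out_j not_input].
rewrite mxE A_ex_mul B_ex_mul x_supp ?mode_permE // add0r.
by rewrite -val_eqE /= (negbTE not_input) mul0r.
Qed.

Lemma delta_sub_reach_space pi (j : 'I_n) :
  supp pi j -> ((delta_mx 0 j : 'rV[R]_n) <= reach_space A_ex B_ex pi)%MS.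
Proof.
elim/last_ind: pi j => [|pi i IH] j //.
rewrite /supp map_rcons supp_from_rcons -/(supp pi) reach_space_rcons /reach_step.
case/orP => [in_j|/andP [lab0 /eqP j_entry]].
  apply: submx_trans (addsmxSl _ _); rewrite -(delta_mul_trA_ex i j).
  by apply: submxMr; apply: IH; rewrite mode_permE.
apply: submx_trans (addsmxSr _ _).
have -> : j = entry_ord by apply: val_inj.
by rewrite /B_ex lab0 scale1r trmx_delta.
Qed.

Definition pot (S : nat -> bool) := (\sum_(j < n) S j * weight entry j)%N.

Lemma pot_step S i : (pot (supp_step entry S (lab i)) <= pot S + 1)%N.
Proof.
rewrite /pot /supp_step /=; set s := mode_perm i; set l := lab i; set a := (entry + l).-1.
have reindex (F : nat -> nat) : (\sum_(j < n) F (s j) = \sum_(k < n) F k)%N.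
  by apply/esym/reindex_inj/perm_inj.
have step_le (j : 'I_n) :
    ((S (relabel entry l j) || (l == 0%N) && (j == entry :> nat)) * weight entry j <=
     S (s j) * weight entry (s j) + ((l != 0%N) && (s j == a :> nat)) +
     ((l == 0%N) && (j == entry :> nat)))%N.
  have := weight_relabel entry l j; rewrite mode_permE -/l -/a.
  have weight_entry : weight entry entry = 1%N by rewrite /weight leqnn.
  case: (eqVneq (j : nat) entry) => [->|_]; rewrite ?weight_entry;
    by case: (S _); case: (l == 0%N) => /=; lia.
apply: leq_trans (leq_sum _ (fun j _ => step_le j)) _.
rewrite !big_split /= (reindex (fun k => S k * weight entry k)%N).
rewrite (reindex (fun k => (l != 0%N) && (k == a))) -addnA leq_add2l.
case: (l == 0%N) => /=; first by rewrite big1_eq sum_ord_eq_le1.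
by rewrite big1_eq addn0 sum_ord_eq_le1.
Qed.

Lemma pot_supp pi : (pot (supp pi) <= size pi)%N.
Proof.
elim/last_ind: pi => [|pi i IH]; first by rewrite /pot big1.
rewrite size_rcons /supp map_rcons /supp_from foldl_rcons.
by apply: leq_trans (pot_step _ i) _; rewrite addn1 ltnS.
Qed.

Lemma pot_full (S : nat -> bool) :
  (forall j : 'I_n, S j) -> pot S = (n + 'C(nlab, 2))%N.
Proof.
move=> full; rewrite /pot (eq_bigr (fun j : 'I_n => weight entry j)) => [|j _]; last first.
  by rewrite full mul1n.
rewrite -(big_mkord xpredT (weight entry)).
have def_n : n = (entry.+1 + nlab.-1)%N by have := entry_add_nlab; have := nlab_gt0; lia.
rewrite {1}def_n sum_weight prednK ?nlab_gt0 //; have := entry_add_nlab; lia.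
Qed.

Lemma controllable_ex_size_ge pi :
  controllable_seq A_ex B_ex pi -> (n + 'C(nlab, 2) <= size pi)%N.
Proof.
move=> ctrl; have [u reach_1] := ctrl (const_mx 1).
rewrite -(@pot_full (supp pi)) ?pot_supp // => j; apply/negPn/negP => out_j.
have zero_supp (k : 'I_n) : ~~ false -> (0 : 'cV[R]_n) k 0 = 0 by rewrite mxE.
have := run_supp u 1 zero_supp out_j.
by rewrite reach_1 mxE => /eqP; rewrite oner_eq0.
Qed.

Definition witness_labels := staircase nlab.-1 ++ nseq entry.+1 0%N.
Definition witness : seq 'I_m := map inord witness_labels.

Lemma map_lab_witness : map lab witness = witness_labels.
Proof.
rewrite -map_comp; apply: map_id_in => l l_in /=.
have le_l : (l <= nlab.-1)%N.
  move: l_in; rewrite mem_cat => /orP [/(allP (staircase_le _))//|/nseqP [-> _]].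
  exact: leq0n.
by rewrite /lab inordK; have := nlab_gt0; rewrite /nlab in le_l *; lia.
Qed.

Lemma size_witness : size witness = (n + 'C(nlab, 2))%N.
Proof.
rewrite size_map size_cat size_staircase size_nseq prednK ?nlab_gt0 //.
by have := entry_add_nlab; have := nlab_gt0; lia.
Qed.

Lemma supp_witness (j : 'I_n) : supp witness j.
Proof.
rewrite /supp map_lab_witness supp_from_cat (eq_supp_from _ _ (supp_from_staircase _)) //.
rewrite supp_from_rotate // => [|k le_k] /=; last lia.
rewrite subnn.
by have := ltn_ord j; have := entry_add_nlab; have := nlab_gt0; case: ltnP; lia.
Qed.

Lemma controllable_witness : controllable_seq A_ex B_ex witness.
Proof.
move=> x; apply/reachableP; apply: submx_trans (submx1 _) _.
by apply/row_subP => j; rewrite row1; apply: delta_sub_reach_space (supp_witness j).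
Qed.

End Construction.

Lemma min_length_formula n m :
  (if m <= n then n + (m * m.-1) %/ 2 else (n * n.+1) %/ 2)%N = (n + 'C(minn m n, 2))%N.
Proof.
case: leqP => [le_mn|lt_nm]; first by rewrite bin2 divn2.
by rewrite divn2 mulnC -bin2 (binS n 1) bin1 addnC.
Qed.

Theorem theorem2 (R : realType) :
  (* (1) *)
  (forall (n m : nat) (p : 'I_m -> nat) (A : 'I_m -> 'M[R]_n)
          (B : forall i : 'I_m, 'M[R]_(n, p i)),
      (1 <= n)%N -> (1 <= m)%N ->
      (forall i, A i \in unitmx) ->
      controllable_system A B ->
      exists pi : seq 'I_m,
        (size pi <= (n * n.+1) %/ 2)%N /\ controllable_seq A B pi)
  /\
  (* (2) *)
  (forall n m : nat, (1 <= n)%N -> (1 <= m)%N ->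
    exists (p : 'I_m -> nat) (A : 'I_m -> 'M[R]_n)
           (B : forall i : 'I_m, 'M[R]_(n, p i)),
      (forall i, 0 < p i)%N /\
      (forall i, A i \in unitmx) /\
      controllable_system A B /\
      let L := if (m <= n)%N then (n + (m * m.-1) %/ 2)%N
               else ((n * n.+1) %/ 2)%N in
      (exists pi : seq 'I_m, size pi = L /\ controllable_seq A B pi) /\
      (forall pi : seq 'I_m, controllable_seq A B pi -> (L <= size pi)%N)).
Proof.
split=> [n m p A B _ _ A_unit|[//|n'] [//|m'] _ _].
  exact: short_controllable_seq.
exists (fun=> 1%N), (@A_ex R n' m'), (@B_ex R n' m').
do 3?split => //; first exact: A_ex_unit.
  by move=> x; exists (witness n' m'); apply: controllable_witness.
rewrite min_length_formula => L; split=> [|pi]; last exact: controllable_ex_size_ge.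
by exists (witness n' m'); split; [exact: size_witness | exact: controllable_witness].
Qed.
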